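(* Let $k\ge1$ and consider the exponential mixture density on $(0,\infty)$ $$f(x\mid\lambda,\boldsymbol\gamma,\mathbf p)=\sum_{i=1}^k\frac{p_i}{\lambda_i}e^{-x/\lambda_i},\qquad\lambda_i=\frac{\lambda\gamma_i}{p_i},$$ where $\lambda>0$, $p_i>0$ with $\sum_ip_i=1$, and $\gamma_i>0$ with $\sum_i\gamma_i=1$ (so that $\lambda$ is the mean of the mixture). Put the prior $\lambda^{-1}\,\mathrm d\lambda\times\pi_0(\mathrm d(\boldsymbol\gamma,\mathbf p))$ where $\pi_0$ is any proper probability distribution on $(\boldsymbol\gamma,\mathbf p)$. Then for any sample $x_1,\dots,x_n>0$ with $n\ge1$, the posterior distribution is proper, i.e. $0<\int\prod_{j=1}^n f(x_j\mid\lambda,\boldsymbol\gamma,\mathbf p)\,\lambda^{-1}\mathrm d\lambda\,\pi_0(\mathrm d(\boldsymbol\gamma,\mathbf p))<\infty$.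
   Context: A posterior is proper when likelihood times prior has finite positive total integral over the parameter space. *)

From HB Require Import structures.
From mathcomp Require Import all_boot all_order all_algebra.
From mathcomp Require Import all_classical all_reals all_analysis.
Set Implicit Arguments. Unset Strict Implicit. Unset Printing Implicit Defensive.
Import Order.TTheory GRing.Theory Num.Theory.
Local Open Scope ring_scope.

Definition in_simplex (R : realType) (k : nat) (w : 'I_k -> R) : Prop :=
  (forall i, 0 < w i) /\ \sum_(i < k) w i = 1.

Definition comp_scale (R : realType) (k : nat) (lam : R) (gam p : 'I_k -> R)
  (i : 'I_k) : R := lam * gam i / p i.

Definition expmix_density (R : realType) (k : nat) (lam : R) (gam p : 'I_k -> R)
  (x : R) : R :=
  \sum_(i < k) p i / comp_scale lam gam p i * expR (- (x / comp_scale lam gam p i)).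

(* likelihood of the sample times the improper density lambda^-1 *)
Definition post_kernel (R : realType) (k n : nat) (xs : 'I_n -> R)
  (lam : R) (gam p : 'I_k -> R) : R :=
  (\prod_(j < n) expmix_density lam gam p (xs j)) * lam^-1.

(* Integrate out lam first.  With b_i = p_i / gam_i, the first likelihood
   factor divided by lam is sum_i p_i (b_i / lam^2) e^(-x_1 b_i / lam), and
   (b / lam^2) e^(-c b / lam) has integral over lam > 0 at most 2 / c^2 + 1
   whatever b is; every other factor satisfies f(x_j | .) <= 1 / x_j.  Hence
   each lam-section of the posterior kernel has integral bounded uniformly in
   (gam, p), and Tonelli bounds the whole integral by that constant times
   pi0(T) = 1.  Positivity holds because the kernel is positive on
   (0, +oo) x T, a set of infinite product measure. *)

From mathcomp Require Import all_boot all_order all_algebra.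
From mathcomp Require Import all_classical all_reals all_analysis.
From mathcomp Require Import ring lra measurable_realfun.
Import Order.TTheory GRing.Theory Num.Theory.
Import numFieldNormedType.Exports.
Local Open Scope classical_set_scope.
Local Open Scope ring_scope.

Lemma measurable_funV_gt0 d (T : measurableType d) (R : realType)
    (D : set T) (f : T -> R) :
  measurable_fun D f -> (forall x, D x -> 0 < f x) ->
  measurable_fun D (fun x => (f x)^-1).
Proof.
move=> mf f_gt0.
apply: (eq_measurable_fun (fun x => expR (- ln (f x)))).
  by move=> x; rewrite inE => Dx; rewrite expRN lnK // posrE f_gt0.
apply: measurableT_comp; first exact: measurable_expR.
by apply/measurable_funN/measurableT_comp; first exact: measurable_ln.
Qed.

Section scaled_decay.
Context {R : realType}.
Implicit Types b c l : R.

Definition scaled_decay b c l : R := b / l ^+ 2 * expR (- (c * b / l)).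

Lemma scaled_decay_ge0 b c l : 0 <= b -> 0 <= scaled_decay b c l.
Proof. by move=> b0; rewrite mulr_ge0 ?expR_ge0 ?divr_ge0 ?sqr_ge0. Qed.

(* With u = c b / l the function is u^2 e^(-u) / (c^2 b), and e^u >= u^2 / 2. *)
Lemma scaled_decay_le_const b c l : 0 < b -> 0 < c -> 0 < l ->
  scaled_decay b c l <= 2 / (c ^+ 2 * b).
Proof.
move=> b0 c0 l0; rewrite /scaled_decay.
set u := c * b / l.
have u0 : 0 < u by rewrite divr_gt0 ?mulr_gt0.
have -> : b / l ^+ 2 = u ^+ 2 / (c ^+ 2 * b).
  by rewrite /u; field; rewrite ?mulf_neq0 ?expf_neq0 ?gt_eqF.
rewrite mulrAC; apply: ler_wpM2r.
  by rewrite invr_ge0 mulr_ge0 ?sqr_ge0 ?ltW.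
rewrite expRN ler_pdivrMr ?expR_gt0//.
have := expR_ge1Dxn 1 (ltW u0); rewrite /= (_ : (2`!)%:R = 2 :> R) //.
have := sqr_ge0 u; lra.
Qed.

Lemma scaled_decay_le_inv_sq b c l : 0 <= b -> 0 < c -> 0 < l ->
  scaled_decay b c l <= b / l ^+ 2.
Proof.
move=> b0 c0 l0; rewrite /scaled_decay -[leRHS]mulr1.
rewrite ler_wpM2l ?divr_ge0 ?sqr_ge0//.
by rewrite expR_le1 oppr_le0 divr_ge0 ?mulr_ge0 // ltW.
Qed.

Lemma measurable_inv_sq b :
  measurable_fun (`]0, +oo[%classic : set R) (fun l => b / l ^+ 2).
Proof.
apply/measurable_funM/measurable_funV_gt0 => //.
by move=> l; rewrite /= in_itv /= andbT => l0; rewrite exprn_gt0.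
Qed.

Lemma measurable_scaled_decay b c :
  measurable_fun (`]0, +oo[%classic : set R) (scaled_decay b c).
Proof.
apply/measurable_funM; first exact: measurable_inv_sq.
apply: measurableT_comp; first exact: measurable_expR.
apply/measurable_funN/measurable_funM => //.
by apply: measurable_funV_gt0 => // l; rewrite /= in_itv /= andbT.
Qed.

Lemma integral_inv_sq_tail b : 0 < b ->
  (\int[lebesgue_measure]_(l in `[b, +oo[) (b / l ^+ 2)%:E = 1%:E)%E.
Proof.
move=> b0.
have derivableF l : l != 0 -> derivable (fun y : R => - (b / y)) l 1.
  by move=> l0; apply/derivableN/derivableM => //; exact: derivableV.
rewrite (@ge0_continuous_FTC2y _ (fun l => b / l ^+ 2)
  (fun l => - (b / l)) b 0).
- by rewrite -EFinB divff ?gt_eqF// sub0r opprK.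
- by move=> l bl; rewrite divr_ge0 ?sqr_ge0 ?ltW.
- apply: continuous_in_subspaceT => l; rewrite inE /= in_itv /= andbT => bl.
  have l0 : l != 0 by rewrite gt_eqF// (lt_le_trans b0).
  apply: cvgM; first exact: cvg_cst.
  by apply: cvgV; [rewrite expf_neq0 | apply: cvgM; exact: cvg_id].
- rewrite -oppr0; apply: cvgN; rewrite -(mulr0 b).
  apply: cvgM; first exact: cvg_cst.
  by apply/gtr0_cvgV0; [near=> l | exact: cvg_id].
- by move=> l bl; apply: derivableF; rewrite gt_eqF// (lt_trans b0).
- have /derivable1_diffP := derivableF _ (lt0r_neq0 b0).
  move=> /differentiable_continuous.
  exact: cvg_at_right_filter.
- move=> l; rewrite in_itv /= andbT => bl.
  have l0 : l != 0 by rewrite gt_eqF// (lt_trans b0).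
  rewrite derive1E deriveN; last by apply: derivableM => //; exact: derivableV.
  rewrite deriveM//; last exact: derivableV.
  rewrite deriveV// derive_id derive_cst scaler0 addr0 [_%:A]mulr1.
  by rewrite -[b *: _]/(b * _) mulrN opprK.
Unshelve. all: by end_near. Qed.

Lemma integral_scaled_decay_head b c : 0 < b -> 0 < c ->
  (\int[lebesgue_measure]_(l in `]0%R, b]) (scaled_decay b c l)%:E
    <= (2 / c ^+ 2)%:E)%E.
Proof.
move=> b0 c0.
have sub : (`]0, b]%classic : set R) `<=` `]0, +oo[.
  by move=> l /=; rewrite !in_itv /= => /andP[-> _].
apply: (@le_trans _ _
  (\int[lebesgue_measure]_(l in `]0%R, b]) (2 / (c ^+ 2 * b))%:E)%E).
  apply: ge0_le_integral => //.
  - by move=> l _; rewrite lee_fin scaled_decay_ge0 ?ltW.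
  - apply/measurable_EFinP.
    exact: measurable_funS (measurable_itv _) sub (measurable_scaled_decay b c).
  - move=> l; rewrite /= in_itv /= => /andP[l0 _].
    by rewrite lee_fin scaled_decay_le_const.
rewrite integral_cst //.
rewrite -[X in (_ * X)%E]/(lebesgue_measure (`]0%R, b]%classic : set R)).
rewrite lebesgue_measure_itv /= lte_fin b0 -EFinB -EFinM subr0 lee_fin.
rewrite [leLHS](_ : _ = 2 / c ^+ 2) //.
by field; rewrite !gt_eqF// exprn_gt0.
Qed.

Lemma integral_scaled_decay_tail b c : 0 < b -> 0 < c ->
  (\int[lebesgue_measure]_(l in `]b, +oo[) (scaled_decay b c l)%:E <= 1%:E)%E.
Proof.
move=> b0 c0.
have sub : (`]b, +oo[%classic : set R) `<=` `]0, +oo[.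
  by move=> l /=; rewrite !in_itv /= !andbT; exact: lt_trans.
have m_inv_sq := measurable_funS (measurable_itv _) sub (measurable_inv_sq b).
rewrite -(integral_inv_sq_tail _ b0) -integral_itv_obnd_cbnd; last first.
  exact/measurable_EFinP.
apply: ge0_le_integral => //.
- by move=> l _; rewrite lee_fin scaled_decay_ge0 ?ltW.
- apply/measurable_EFinP.
  exact: measurable_funS (measurable_itv _) sub (measurable_scaled_decay b c).
- exact/measurable_EFinP.
- move=> l /sub; rewrite /= in_itv /= andbT => l0.
  by rewrite lee_fin scaled_decay_le_inv_sq ?ltW.
Qed.

(* The exact value is 1 / c; splitting at l = b avoids a change of variables. *)
Lemma integral_scaled_decay_le b c : 0 < b -> 0 < c ->
  (\int[lebesgue_measure]_(l in `]0%R, +oo[) (scaled_decay b c l)%:E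
    <= (2 / c ^+ 2 + 1)%:E)%E.
Proof.
move=> b0 c0.
rewrite (@itv_bndbnd_setU _ _ _ (BRight b)); last 2 first.
- by rewrite bnd_simp ltW.
- by [].
rewrite ge0_integral_setU //; last 3 first.
- have /measurable_EFinP := measurable_scaled_decay b c.
  by rewrite -itv_bndbnd_setU// bnd_simp ltW.
- by move=> l _; rewrite lee_fin scaled_decay_ge0 // ltW.
- apply/disj_setPS => l []; rewrite /= !in_itv /= => /andP[_ lb] /andP[bl _].
  by move: (lt_le_trans bl lb); rewrite ltxx.
rewrite EFinD; apply: leeD.
- exact: integral_scaled_decay_head.
- exact: integral_scaled_decay_tail.
Qed.
End scaled_decay.

Section exponential_term.
Context {R : realType}.
Implicit Types q s x : R.

Lemma exp_term_gt0 q s x : 0 < q -> 0 < s -> 0 < q / s * expR (- (x / s)).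
Proof. by move=> q0 s0; rewrite mulr_gt0 ?expR_gt0 ?divr_gt0. Qed.

(* (x / s) e^(-x/s) <= 1 since e^u >= 1 + u. *)
Lemma exp_term_le q s x : 0 <= q -> 0 < s -> 0 < x ->
  q / s * expR (- (x / s)) <= q / x.
Proof.
move=> q0 s0 x0; set u := x / s.
have u0 : 0 < u by rewrite divr_gt0.
have -> : q / s = q / x * u by rewrite /u; field; rewrite !gt_eqF.
rewrite -mulrA; apply: ler_piMr; first by rewrite divr_ge0 // ltW.
rewrite expRN ler_pdivrMr ?expR_gt0// mul1r.
have := expR_ge1Dx u; lra.
Qed.
End exponential_term.

Section exponential_mixture.
Context {R : realType} {k : nat}.
Context {gam p : 'I_k -> R}.
Hypotheses (gam_gt0 : forall i, 0 < gam i) (p_simplex : in_simplex p).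
Implicit Types lam x : R.

Lemma comp_scale_gt0 lam i : 0 < lam -> 0 < comp_scale lam gam p i.
Proof.
by move=> lam0; rewrite divr_gt0 ?mulr_gt0 ?gam_gt0 ?p_simplex.1.
Qed.

Lemma expmix_density_ge0 lam x : 0 < lam -> 0 <= expmix_density lam gam p x.
Proof.
move=> lam0; apply: sumr_ge0 => i _.
by rewrite ltW ?exp_term_gt0 ?comp_scale_gt0 ?p_simplex.1.
Qed.

Lemma expmix_density_gt0 lam x : (1 <= k)%N -> 0 < lam ->
  0 < expmix_density lam gam p x.
Proof.
move=> k_gt0 lam0; rewrite /expmix_density (bigD1 (Ordinal k_gt0)) //=.
rewrite ltr_wpDr ?exp_term_gt0 ?comp_scale_gt0 ?p_simplex.1//.
apply: sumr_ge0 => i _.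
by rewrite ltW ?exp_term_gt0 ?comp_scale_gt0 ?p_simplex.1.
Qed.

Lemma expmix_density_le_inv lam x : 0 < lam -> 0 < x ->
  expmix_density lam gam p x <= x^-1.
Proof.
move=> lam0 x0; rewrite -[leRHS]mul1r -p_simplex.2 mulr_suml.
apply: ler_sum => i _.
by rewrite exp_term_le ?ltW ?p_simplex.1 ?comp_scale_gt0.
Qed.

Lemma expmix_density_divl lam x : 0 < lam ->
  expmix_density lam gam p x / lam =
  \sum_(i < k) p i * scaled_decay (p i / gam i) x lam.
Proof.
move=> lam0; rewrite mulr_suml; apply: eq_bigr => i _.
have [p0 g0] := (p_simplex.1 i, gam_gt0 i).
rewrite /comp_scale /scaled_decay.
have -> : x / (lam * gam i / p i) = x * (p i / gam i) / lam.
  by field; rewrite !gt_eqF.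
by field; rewrite !gt_eqF.
Qed.
End exponential_mixture.

Lemma measurable_post_kernel {R : realType} {k n : nat} d (U : measurableType d)
    (xs : 'I_n -> R) (D : set U) (lamf : U -> R) (gamf pf : U -> 'I_k -> R) :
  measurable_fun D lamf -> (forall i, measurable_fun D (fun u => gamf u i)) ->
  (forall i, measurable_fun D (fun u => pf u i)) ->
  (forall u, D u -> 0 < lamf u) -> (forall u i, D u -> 0 < gamf u i) ->
  (forall u i, D u -> 0 < pf u i) ->
  measurable_fun D (fun u => post_kernel xs (lamf u) (gamf u) (pf u)).
Proof.
move=> mlam mgam mp lam0 gam0 p0.
have mscale i :
    measurable_fun D (fun u => comp_scale (lamf u) (gamf u) (pf u) i).
  rewrite /comp_scale; apply/measurable_funM/measurable_funV_gt0 => //.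
  - exact: measurable_funM.
  - by move=> u Du; exact: p0.
have scale0 i u : D u -> 0 < comp_scale (lamf u) (gamf u) (pf u) i.
  by move=> Du; rewrite divr_gt0 ?mulr_gt0 ?lam0 ?gam0 ?p0.
rewrite /post_kernel /expmix_density.
apply/measurable_funM/measurable_funV_gt0 => //.
apply: measurable_prod => j _; apply: measurable_sum => i.
apply: measurable_funM.
  by apply/measurable_funM/measurable_funV_gt0 => // u Du; exact: scale0.
apply: measurableT_comp; first exact: measurable_expR.
apply/measurable_funN/measurable_funM => //.
by apply: measurable_funV_gt0 => // u Du; exact: scale0.
Qed.

Lemma measurable_post_kernel_prod {R : realType} {k n : nat} d
    (T : measurableType d) (xs : 'I_n -> R) (gam p : T -> 'I_k -> R) :
  (forall i, measurable_fun setT (fun t => gam t i)) ->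
  (forall i, measurable_fun setT (fun t => p t i)) ->
  (forall t i, 0 < gam t i) -> (forall t i, 0 < p t i) ->
  measurable_fun ((`]0%R, +oo[%classic : set R) `*` [set: T])
    (fun z => post_kernel xs z.1 (gam z.2) (p z.2)).
Proof.
move=> mgam mp gam_gt0 p_gt0.
have msnd : measurable_fun ((`]0%R, +oo[%classic : set R) `*` [set: T]) snd.
  exact: measurable_funS measurableT (@subsetT _ _) measurable_snd.
apply: measurable_post_kernel => //.
- exact: measurable_funS measurableT (@subsetT _ _) measurable_fst.
- by move=> i; apply: measurableT_comp (mgam i) msnd.
- by move=> i; apply: measurableT_comp (mp i) msnd.
- by case=> l t [/=]; rewrite in_itv /= andbT.
Qed.

Section posterior_kernel.
Context {R : realType} {k : nat}.
Context {gam p : 'I_k -> R}.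
Hypotheses (gam_gt0 : forall i, 0 < gam i) (p_simplex : in_simplex p).

Lemma post_kernel_ge0 n (xs : 'I_n -> R) lam : 0 < lam ->
  0 <= post_kernel xs lam gam p.
Proof.
move=> lam0; apply: mulr_ge0; last by rewrite invr_ge0 ltW.
by apply: prodr_ge0 => j _; exact: expmix_density_ge0.
Qed.

Lemma post_kernel_gt0 n (xs : 'I_n -> R) lam : (1 <= k)%N -> 0 < lam ->
  0 < post_kernel xs lam gam p.
Proof.
move=> k_gt0 lam0; rewrite mulr_gt0 ?invr_gt0 //.
by apply: prodr_gt0 => j _; exact: expmix_density_gt0.
Qed.

Lemma post_kernel_le n (xs : 'I_n.+1 -> R) lam :
  (forall j, 0 < xs j) -> 0 < lam ->
  post_kernel xs lam gam p <= (\prod_(j < n) (xs (lift ord0 j))^-1) *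
    \sum_(i < k) p i * scaled_decay (p i / gam i) (xs ord0) lam.
Proof.
move=> xs_gt0 lam0; rewrite /post_kernel big_ord_recl mulrAC.
rewrite expmix_density_divl // [leRHS]mulrC; apply: ler_wpM2l.
  apply: sumr_ge0 => i _; have [p0 g0] := (p_simplex.1 i, gam_gt0 i).
  by rewrite mulr_ge0 ?scaled_decay_ge0 ?divr_ge0 // ltW.
apply: ler_prod => j _.
by rewrite expmix_density_ge0 ?expmix_density_le_inv.
Qed.

Lemma integral_decay_mixture_le x : 0 < x ->
  (\int[lebesgue_measure]_(lam in `]0%R, +oo[)
     (\sum_(i < k) p i * scaled_decay (p i / gam i) x lam)%:E
   <= (2 / x ^+ 2 + 1)%:E)%E.
Proof.
move=> x0.
have [p0 g0] := (p_simplex.1, gam_gt0).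
have decay_ge0 i lam : (0 <= (scaled_decay (p i / gam i) x lam)%:E)%E.
  by rewrite lee_fin scaled_decay_ge0 // divr_ge0 // ltW.
have m_decay i := measurable_scaled_decay (p i / gam i) x.
under eq_integral => lam _ do rewrite -sumEFin.
rewrite ge0_integral_sum //; last 2 first.
- by move=> i; apply/measurable_EFinP/measurable_funM; last exact: m_decay.
- by move=> i lam _; rewrite EFinM mule_ge0 // lee_fin ltW.
have -> : (2 / x ^+ 2 + 1)%:E = (\sum_(i < k) (p i * (2 / x ^+ 2 + 1))%:E)%E.
  by rewrite sumEFin -mulr_suml p_simplex.2 mul1r.
apply: lee_sum => i _.
under eq_integral => lam _ do rewrite EFinM.
rewrite ge0_integralZl_EFin ?EFinM //; last 2 first.
- by apply/measurable_EFinP; exact: m_decay.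
- exact: ltW.
apply: lee_wpmul2l; first by rewrite lee_fin ltW.
by rewrite integral_scaled_decay_le ?divr_gt0.
Qed.

Lemma integral_post_kernel_le n (xs : 'I_n.+1 -> R) : (forall j, 0 < xs j) ->
  (\int[lebesgue_measure]_(lam in `]0%R, +oo[) (post_kernel xs lam gam p)%:E
   <= ((\prod_(j < n) (xs (lift ord0 j))^-1) * (2 / xs ord0 ^+ 2 + 1))%:E)%E.
Proof.
move=> xs_gt0; set C := \prod_(j < n) _.
have C0 : 0 <= C by apply: prodr_ge0 => j _; rewrite invr_ge0 ltW.
have lam_gt0 lam : (`]0%R, +oo[%classic : set R) lam -> 0 < lam.
  by rewrite /= in_itv /= andbT.
have [p0 g0] := (p_simplex.1, gam_gt0).
apply: (@le_trans _ _ (\int[lebesgue_measure]_(lam in `]0%R, +oo[)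
   (C%:E *
    (\sum_(i < k) p i * scaled_decay (p i / gam i) (xs ord0) lam)%:E))%E).
  apply: ge0_le_integral => //.
  - by move=> lam /lam_gt0 lam0; rewrite lee_fin post_kernel_ge0.
  - exact/measurable_EFinP/measurable_post_kernel.
  - apply/measurable_funeM/measurable_EFinP/measurable_sum => i.
    by apply/measurable_funM; last exact: measurable_scaled_decay.
  - by move=> lam /lam_gt0 lam0; rewrite -EFinM lee_fin post_kernel_le.
rewrite ge0_integralZl_EFin //; last 2 first.
- move=> lam /lam_gt0 lam0; rewrite lee_fin sumr_ge0 // => i _.
  by rewrite mulr_ge0 ?scaled_decay_ge0 ?divr_ge0 // ltW.
- apply/measurable_EFinP/measurable_sum => i.
  by apply/measurable_funM; last exact: measurable_scaled_decay.
by rewrite EFinM lee_wpmul2l ?lee_fin // integral_decay_mixture_le.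
Qed.
End posterior_kernel.

Lemma lebesgue_x_probability_itvy (R : realType) d (T : measurableType d)
    (P : probability T R) (a : R) :
  ((lebesgue_measure \x P) (`]a, +oo[ `*` [set: T]) = +oo)%E.
Proof.
rewrite product_measure1E //= probability_setT mule1 lebesgue_measure_itv /=.
by rewrite ltry EFinN addye.
Qed.

Lemma integral_gt0 d (T : measurableType d) (R : realType)
    (mu : {measure set T -> \bar R}) (D : set T) (f : T -> R) :
  measurable D -> measurable_fun D f -> (forall x, D x -> 0 < f x) ->
  (0 < mu D)%E -> (0 < \int[mu]_(x in D) (f x)%:E)%E.
Proof.
move=> mD mf f_gt0 muD_gt0.
have f_ge0 x : D x -> (0 <= (f x)%:E)%E.
  by move=> Dx; rewrite lee_fin ltW ?f_gt0.
rewrite lt_neqAle integral_ge0 // andbT; apply/eqP => int0.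
have mEf : measurable_fun D (fun x => (f x)%:E) by exact/measurable_EFinP.
have [|N [mN muN0 DN]] := (ae_eq_integral_abs mu mD mEf).1.
  by rewrite int0; apply: eq_integral => x /[!inE] Dx; rewrite gee0_abs ?f_ge0.
have DsubN : D `<=` N.
  by move=> x Dx; apply: DN => /(_ Dx) /= /eqP; rewrite eqe gt_eqF ?f_gt0.
have muN_le0 : (mu N <= 0)%E by rewrite muN0.
have := le_trans (le_measure mu (mem_set mD) (mem_set mN) DsubN) muN_le0.
by rewrite leNgt muD_gt0.
Qed.

Lemma integral_prod_le_sections d1 d2 (T1 : measurableType d1)
    (T2 : measurableType d2) (R : realType)
    (m1 : {sigma_finite_measure set T1 -> \bar R})
    (m2 : {sigma_finite_measure set T2 -> \bar R})
    (D : set T1) (f : T1 * T2 -> \bar R) (M : R) :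
  measurable D -> measurable_fun (D `*` setT) f ->
  (forall z, (D `*` setT) z -> (0 <= f z)%E) ->
  (forall y, \int[m1]_(x in D) f (x, y) <= M%:E)%E ->
  (\int[m1 \x m2]_(z in D `*` setT) f z <= M%:E * m2 setT)%E.
Proof.
move=> mD mf f_ge0 sections_le.
have mDT : measurable (D `*` [set: T2]) by exact: measurableX.
rewrite integral_mkcond fubini_tonelli2; last 2 first.
- exact: (measurable_restrictT _ mDT).1 mf.
- exact: erestrict_ge0.
rewrite -integral_cst //; apply: ge0_le_integral => //.
- by move=> y _; apply: integral_ge0 => x _; exact: erestrict_ge0.
- apply: measurable_fun_fubini_tonelli_G.
  + exact: (measurable_restrictT _ mDT).1 mf.
  + exact: erestrict_ge0.
- move=> y _; rewrite [leLHS](_ : _ = \int[m1]_(x in D) f (x, y))%E //.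
  rewrite integral_mkcond /fubini_G; apply: eq_integral => x _.
  by rewrite !patchE in_setX in_setT andbT.
Qed.

Theorem theorem3 (R : realType) (k n : nat) (d : measure_display)
  (T : measurableType d) (pi0 : probability T R)
  (gam p : T -> 'I_k -> R)
  (hk : (1 <= k)%N) (hn : (1 <= n)%N)
  (gam_meas : forall i : 'I_k, measurable_fun setT (fun t => gam t i))
  (p_meas : forall i : 'I_k, measurable_fun setT (fun t => p t i))
  (gam_simplex : forall t, in_simplex (gam t))
  (p_simplex : forall t, in_simplex (p t))
  (xs : 'I_n -> R) (hxs : forall j, 0 < xs j) :
  (0 < \int[(@lebesgue_measure R) \x pi0]_(z in [set z | (0 < z.1)%R])
          (post_kernel xs z.1 (gam z.2) (p z.2))%:E
   < +oo)%E.
Proof.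
case: n xs hxs hn => [//|n] xs hxs _.
pose D : set (R * T) := `]0%R, +oo[ `*` setT.
have -> : [set z : R * T | 0 < z.1] = D.
  by apply/seteqP; split => z; rewrite /D /= in_itv /= andbT //; case.
have mD : measurable D by exact: measurableX.
have mkernel : measurable_fun D (fun z => post_kernel xs z.1 (gam z.2) (p z.2)).
  apply: measurable_post_kernel_prod => // t i.
  - exact: (gam_simplex t).1.
  - exact: (p_simplex t).1.
have lam_gt0 z : D z -> 0 < z.1 by case: z => l t [/=]; rewrite in_itv /= andbT.
apply/andP; split.
- have muD : (0 < (lebesgue_measure \x pi0) D)%E.
    by rewrite lebesgue_x_probability_itvy.
  apply: integral_gt0 => //.
  move=> [l t] /lam_gt0 l0.
  exact: post_kernel_gt0 (gam_simplex t).1 (p_simplex t) _ _ _ hk l0.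
- pose C := \prod_(j < n) (xs (lift ord0 j))^-1 * (2 / xs ord0 ^+ 2 + 1).
  apply: (@le_lt_trans _ _ (C%:E * pi0 [set: T])%E); last first.
    by rewrite probability_setT mule1 ltry.
  apply: integral_prod_le_sections => //.
  - exact/measurable_EFinP.
  - move=> [l t] /lam_gt0 l0.
    by rewrite lee_fin (post_kernel_ge0 (gam_simplex t).1 (p_simplex t)).
  - move=> t.
    exact: (integral_post_kernel_le (gam_simplex t).1 (p_simplex t)).
Qed.
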